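(* Let $\mathbb O$ be a finite set of consecutive integers containing $0$, and let $\theta=0$. If $x(0)\in\mathbb O^n$ has no coordinate equal to $0$, then there exists a finite legal update sequence from $x(0)$ along which the system reaches, in finite time, either a consensus state $(z,\dots,z)$ with $z\neq 0$ or a non-consensus equilibrium.
   Context: Let $n\ge1$, $\mathcal V=\{1,\dots,n\}$, and let $W=(w_{ij})$ be an $n\times n$ row-stochastic matrix. For $x\in\mathbb O^n$, $i\in\mathcal V$, $z\in\mathbb O$, define $C^i_{\mathrm{social}}(z;x)=\sum_{j=1}^n w_{ij}|z-x_j|$ and $P_i(x)=\{z\in\mathbb O: C^i_{\mathrm{social}}(z;x)\le C^i_{\mathrm{social}}(x_i;x),\ |z-\theta|\le |x_i-\theta|\}$ (Pareto improvements between social cost and cognitive cost $|z-\theta|$). A legal update sequence from $x(0)$ is a finite sequence $(i_1,z_1),\dots,(i_T,z_T)$ with $i_t\in\mathcal V$, generating $x(1),\dots,x(T)$ where $x(t)$ is obtained from $x(t-1)$ by setting coordinate $i_t$ to $z_t$, such that $z_t\in P_{i_t}(x(t-1))$ for every $t$. An equilibrium is a state $x^*$ with $P_i(x^* )=\{x_i^*\}$ for all $i\in\mathcal V$; it is non-consensus if not all coordinates are equal. *)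

From HB Require Import structures.
From mathcomp Require Import all_boot all_order all_algebra.
Set Implicit Arguments. Unset Strict Implicit. Unset Printing Implicit Defensive.
Import Order.TTheory GRing.Theory Num.Theory.
Local Open Scope ring_scope.

Definition inO (a b : int) (z : int) : bool := (a <= z) && (z <= b).

Definition state (n : nat) := 'I_n -> int.

Definition in_On (a b : int) (n : nat) (x : state n) : Prop :=
  forall j, inO a b (x j).

Definition row_stochastic (R : numDomainType) (n : nat) (W : 'M[R]_n) : Prop :=
  (forall i j, 0 <= W i j) /\ (forall i, \sum_(j < n) W i j = 1).

Definition Csocial (R : numDomainType) (n : nat) (W : 'M[R]_n)
  (i : 'I_n) (z : int) (x : state n) : R :=
  \sum_(j < n) W i j * (`|z - x j|%:~R).

Definition inP (R : numDomainType) (n : nat) (W : 'M[R]_n) (a b theta : int)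
  (x : state n) (i : 'I_n) (z : int) : Prop :=
  [/\ inO a b z,
      Csocial W i z x <= Csocial W i (x i) x
    & `|z - theta| <= `|x i - theta| ].

Definition upd (n : nat) (x : state n) (i : 'I_n) (z : int) : state n :=
  fun j => if j == i then z else x j.

Fixpoint legal (R : numDomainType) (n : nat) (W : 'M[R]_n) (a b theta : int)
  (x : state n) (s : seq ('I_n * int)) : Prop :=
  match s with
  | [::] => True
  | (i, z) :: s' => inP W a b theta x i z /\ legal W a b theta (upd x i z) s'
  end.

Fixpoint run (n : nat) (x : state n) (s : seq ('I_n * int)) : state n :=
  match s with
  | [::] => x
  | (i, z) :: s' => run (upd x i z) s'
  end.

Definition equilibrium (R : numDomainType) (n : nat) (W : 'M[R]_n)
  (a b theta : int) (x : state n) : Prop :=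
  forall i z, inP W a b theta x i z <-> z = x i.

Definition consensus_at (n : nat) (x : state n) (z : int) : Prop :=
  forall j, x j = z.

Definition non_consensus (n : nat) (x : state n) : Prop :=
  exists i j, x i <> x j.

From HB Require Import structures.
From mathcomp Require Import all_boot all_order all_algebra.
From mathcomp Require Import zify.
Import Order.TTheory GRing.Theory Num.Theory.
Set Implicit Arguments. Unset Strict Implicit. Unset Printing Implicit Defensive.
Local Open Scope ring_scope.

(* First, while some positive agent can step down without
   raising its social cost, it does so; from [1] it jumps to [-1] rather than
   to [0], which is allowed because, with no opinion at [0], the cost change of
   that jump is twice the one-step slope.  Then every positive agent strictly
   prefers its opinion to the one below, and negative agents step up while this
   is free; raising other opinions only makes the positive agents more stable.
   The social cost is convex in the own opinion, so once no such move is left,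
   every Pareto move of a nonzero agent strictly raises its social cost, and an
   agent at [0] cannot move at all: the state is an equilibrium.  Some opinion
   stays nonzero throughout. *)

Lemma upd_same n (x : state n) i z : upd x i z i = z.
Proof. by rewrite /upd eqxx. Qed.

Lemma upd_other n (x : state n) i z j : j != i -> upd x i z j = x j.
Proof. by rewrite /upd => /negbTE->. Qed.

Lemma in_On_upd a b n (x : state n) i z :
  in_On a b x -> inO a b z -> in_On a b (upd x i z).
Proof. by move=> xO zO j; rewrite /upd; case: ifP. Qed.

Lemma sum_upd (V : zmodType) (f : int -> V) n (x : state n) i z :
  \sum_(j < n) f (upd x i z j) = \sum_(j < n) f (x j) + (f z - f (x i)).
Proof.
rewrite (bigD1 i) //= [X in _ = X + _](bigD1 i) //= upd_same.
rewrite (eq_bigr (fun j => f (x j))) => [|j /upd_other-> //].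
by rewrite addrAC [f (x i) + _]addrC subrK.
Qed.

Section Reachability.
Variables (R : numDomainType) (n : nat) (W : 'M[R]_n) (a b theta : int).

Definition reaches (P : state n -> Prop) (x : state n) : Prop :=
  exists s, legal W a b theta x s /\ P (run x s).

Lemma reaches_now P x : P x -> reaches P x.
Proof. by exists [::]. Qed.

Lemma reaches_upd P x i z :
  inP W a b theta x i z -> reaches P (upd x i z) -> reaches P x.
Proof. by move=> xiz [s [ls Ps]]; exists ((i, z) :: s). Qed.

Lemma reaches_by_descent P (I : state n -> Prop) (mu : state n -> int) :
  (forall x, I x -> 0 <= mu x) ->
  (forall x, I x -> reaches P x \/
     exists i z, [/\ inP W a b theta x i z, I (upd x i z) & mu (upd x i z) < mu x]) ->
  forall x, I x -> reaches P x.
Proof.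
move=> mu_ge0 step x; have [m] := ubnP `|mu x|%N; elim: m x => // m IH x mu_lt Ix.
have [//|[i [z [xiz Ix' mu_dec]]]] := step x Ix.
apply: reaches_upd xiz (IH _ _ Ix').
by have := mu_ge0 _ Ix; have := mu_ge0 _ Ix'; lia.
Qed.

End Reachability.

Section SocialCost.
Variables (R : realFieldType) (n : nat) (W : 'M[R]_n).
Hypothesis W_stoch : row_stochastic W.

Definition wsum (i : 'I_n) (e : 'I_n -> int) : R := \sum_(j < n) W i j * (e j)%:~R.

Lemma eq_wsum i (d e : 'I_n -> int) : d =1 e -> wsum i d = wsum i e.
Proof. by move=> de; apply: eq_bigr => j _; rewrite de. Qed.

Lemma ler_wsum i (d e : 'I_n -> int) : (forall j, d j <= e j) -> wsum i d <= wsum i e.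
Proof.
move=> de; apply: ler_sum => j _; apply: ler_wpM2l; first by case: W_stoch.
by rewrite ler_int.
Qed.

Lemma wsumZ i c (e : 'I_n -> int) : wsum i (fun j => c * e j) = c%:~R * wsum i e.
Proof. by rewrite /wsum mulr_sumr; apply: eq_bigr => j _; rewrite intrM mulrCA. Qed.

Lemma wsum_const i c : wsum i (fun=> c) = c%:~R.
Proof. by case: W_stoch => _ sum1; rewrite /wsum -big_distrl /= sum1 mul1r. Qed.

Lemma Csocial_sub i z v x :
  Csocial W i z x - Csocial W i v x = wsum i (fun j => `|z - x j| - `|v - x j|).
Proof. by rewrite /Csocial /wsum -sumrB; apply: eq_bigr => j _; rewrite intrB mulrBr. Qed.

Definition slope_down (x : state n) i v : R := wsum i (fun j => if v <= x j then 1 else -1).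
Definition slope_up (x : state n) i v : R := wsum i (fun j => if x j <= v then 1 else -1).

Lemma Csocial_pred x i v : Csocial W i (v - 1) x - Csocial W i v x = slope_down x i v.
Proof. by rewrite Csocial_sub; apply: eq_wsum => j; case: ifP; lia. Qed.

Lemma Csocial_succ x i v : Csocial W i (v + 1) x - Csocial W i v x = slope_up x i v.
Proof. by rewrite Csocial_sub; apply: eq_wsum => j; case: ifP; lia. Qed.

Lemma Csocial_flip x i :
  (forall j, x j != 0) -> Csocial W i (-1) x - Csocial W i 1 x = 2 * slope_down x i 1.
Proof.
move=> x_nz; rewrite Csocial_sub -[2]/(2%:~R) -wsumZ; apply: eq_wsum => j.
by have := x_nz j; case: ifP; lia.
Qed.

Lemma Csocial_lt_down x i z v :
  z < v -> 0 < slope_down x i v -> Csocial W i v x < Csocial W i z x.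
Proof.
move=> zv slope_gt0; rewrite -subr_gt0 Csocial_sub.
apply: (@lt_le_trans _ _ (wsum i (fun j => (v - z) * (if v <= x j then 1 else -1)))).
  by rewrite wsumZ mulr_gt0 // ltr0z subr_gt0.
by apply: ler_wsum => j; case: ifP; lia.
Qed.

Lemma Csocial_gt_up x i z v :
  v < z -> 0 < slope_up x i v -> Csocial W i v x < Csocial W i z x.
Proof.
move=> vz slope_gt0; rewrite -subr_gt0 Csocial_sub.
apply: (@lt_le_trans _ _ (wsum i (fun j => (z - v) * (if x j <= v then 1 else -1)))).
  by rewrite wsumZ mulr_gt0 // ltr0z subr_gt0.
by apply: ler_wsum => j; case: ifP; lia.
Qed.

Lemma slope_down_mono x y i v :
  (forall j, x j <= y j) -> slope_down x i v <= slope_down y i v.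
Proof. by move=> xy; apply: ler_wsum => j; have := xy j; do 2 case: ifP; lia. Qed.

Lemma slope_down_min x i v : (forall j, v <= x j) -> slope_down x i v = 1.
Proof.
by move=> vx; rewrite /slope_down (@eq_wsum i _ (fun=> 1)) ?wsum_const // => j; rewrite vx.
Qed.

Lemma slope_up_max x i v : (forall j, x j <= v) -> slope_up x i v = 1.
Proof.
by move=> xv; rewrite /slope_up (@eq_wsum i _ (fun=> 1)) ?wsum_const // => j; rewrite xv.
Qed.

End SocialCost.

Lemma nonzero_equilibrium_cases (R : numDomainType) n (W : 'M[R]_n) a b theta
    (x : state n) k :
  equilibrium W a b theta x -> x k != 0 ->
  (exists z : int, z != 0 /\ consensus_at x z) \/
  (equilibrium W a b theta x /\ non_consensus x).
Proof.
move=> eqx xk_nz; case: (boolP [forall j, x j == x k]) => [/forallP same | ].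
  by left; exists (x k); split=> // j; apply/eqP.
by rewrite negb_forall => /existsP [j /eqP xjk]; right; split=> //; exists j, k.
Qed.

Section Dynamics.
Variables (R : realFieldType) (n : nat) (W : 'M[R]_n) (a b : int).
Hypotheses (n_gt0 : (0 < n)%N) (W_stoch : row_stochastic W) (a_le0_le_b : a <= 0 <= b).

Definition stable_pos (x : state n) := forall i, 0 < x i -> 0 < slope_down W x i (x i).
Definition stable_neg (x : state n) := forall i, x i < 0 -> 0 < slope_up W x i (x i).

Lemma equilibrium_of_stable x :
  in_On a b x -> stable_pos x -> stable_neg x -> equilibrium W a b 0 x.
Proof.
move=> xO pos neg i z; split=> [[_ Cz]|->]; last by split=> //; exact: xO.
rewrite !subr0 => zx; apply/eqP; rewrite eq_le; apply/negPn/negP => /nandP.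
rewrite -!ltNge => -[xz | zx'].
- have xi_lt0 : x i < 0 by lia.
  by have := Csocial_gt_up W_stoch xz (neg _ xi_lt0); rewrite ltNge Cz.
- have xi_gt0 : 0 < x i by lia.
  by have := Csocial_lt_down W_stoch zx' (pos _ xi_gt0); rewrite ltNge Cz.
Qed.

Definition settled (x : state n) := equilibrium W a b 0 x /\ exists i, x i != 0.

Definition phaseB_inv (x : state n) :=
  [/\ in_On a b x, stable_pos x & (exists i, 0 < x i) \/ (forall j, x j < 0)].

(* If all opinions are negative, an agent at [-1] has [slope_up] equal to [1],
   so no agent ever reaches [0] while nobody is positive. *)
Lemma phaseB_reaches_settled x : phaseB_inv x -> reaches W a b 0 settled x.
Proof.
apply: (reaches_by_descent (mu := fun x => \sum_(j < n) (b - x j))).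
  by move=> y [yO _ _]; apply: sumr_ge0 => j _; have := yO j; rewrite /inO; lia.
move=> {}x [xO pos sgn_x].
case: (boolP [exists k, (x k < 0) && (slope_up W x k (x k) <= 0)]); last first.
  rewrite negb_exists => /forallP stuck; left; apply: reaches_now; split.
    apply: equilibrium_of_stable => // i xi_lt0.
    by have := stuck i; rewrite xi_lt0 ltNge.
  case: sgn_x => [[i xi_gt0] | all_neg]; first by exists i; lia.
  by exists (Ordinal n_gt0); have := all_neg (Ordinal n_gt0); lia.
case/existsP => k /andP [xk_lt0 slope_le0]; right; exists k, (x k + 1).
have x_le_x' j : x j <= upd x k (x k + 1) j.
  by rewrite /upd; case: eqVneq => [->|]; lia.
have xk1O : inO a b (x k + 1) by have := xO k; rewrite /inO; lia.
split.
- by split=> //; [rewrite -subr_le0 Csocial_succ | lia].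
- split; first exact: in_On_upd.
  + move=> i; case: (eqVneq i k) => [->|ik]; first by rewrite upd_same; lia.
    rewrite upd_other // => xi_gt0.
    by apply: lt_le_trans (pos i xi_gt0) (slope_down_mono _ _ _ x_le_x').
  + case: sgn_x => [[i xi_gt0] | all_neg].
      by left; exists i; have := x_le_x' i; lia.
    have xk_ne1 : x k != -1.
      apply: contraTneq slope_le0 => xk1.
      by rewrite xk1 slope_up_max ?ler10 // => j; have := all_neg j; lia.
    right=> j; case: (eqVneq j k) => [->|jk]; first by rewrite upd_same; lia.
    by rewrite upd_other.
- by rewrite (sum_upd (fun y => b - y)) gtrDl; lia.
Qed.

Definition phaseA_inv (x : state n) := in_On a b x /\ forall j, x j != 0.

Lemma phaseA_step x k :
  phaseA_inv x -> 0 < x k -> slope_down W x k (x k) <= 0 ->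
  exists z, [/\ inP W a b 0 x k z, z < x k & z != 0].
Proof.
move=> [xO x_nz] xk_gt0 slope_le0.
case: (eqVneq (x k) 1) => [xk1 | xk_ne1]; last first.
  exists (x k - 1); split; [ | lia | lia].
  split; [by have := xO k; rewrite /inO; lia | | lia].
  by rewrite -subr_le0 Csocial_pred.
rewrite xk1 in slope_le0 *.
have [j xj_lt1] : exists j, x j < 1.
  apply/existsP; apply: contraTT slope_le0; rewrite negb_exists => /forallP ge1.
  by rewrite slope_down_min ?ler10 // => j; have := ge1 j; lia.
exists (-1); split=> //; split; [ | | lia].
- by have := xO j; have := x_nz j; rewrite /inO; lia.
- by rewrite -subr_le0 xk1 Csocial_flip // pmulr_rle0.
Qed.

Lemma phaseA_reaches_settled x : phaseA_inv x -> reaches W a b 0 settled x.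
Proof.
apply: (reaches_by_descent (mu := fun x => \sum_(j < n) (x j - a))).
  by move=> y [yO _]; apply: sumr_ge0 => j _; have := yO j; rewrite /inO; lia.
move=> {}x [xO x_nz].
case: (boolP [exists k, (0 < x k) && (slope_down W x k (x k) <= 0)]); last first.
  rewrite negb_exists => /forallP stuck; left; apply: phaseB_reaches_settled.
  split=> // [i xi_gt0|]; first by have := stuck i; rewrite xi_gt0 ltNge.
  case: (boolP [exists i, 0 < x i]) => [/existsP | ]; first by left.
  by rewrite negb_exists => /forallP nonpos; right=> j; have := nonpos j; have := x_nz j; lia.
case/existsP => k /andP [xk_gt0 slope_le0].
have [z [xkz zx z_nz]] := phaseA_step (conj xO x_nz) xk_gt0 slope_le0.
right; exists k, z; split=> //.
- split; first by case: xkz => zO _ _; exact: in_On_upd.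
  by move=> j; rewrite /upd; case: ifP.
- by rewrite (sum_upd (fun y => y - a)) gtrDl; lia.
Qed.

End Dynamics.

Theorem theorem4 (R : realFieldType) (n : nat) (W : 'M[R]_n) (a b : int)
  (x0 : state n) :
  (0 < n)%N ->
  row_stochastic W ->
  a <= 0 <= b ->
  in_On a b x0 ->
  (forall j, x0 j != 0) ->
  exists s : seq ('I_n * int),
    legal W a b 0 x0 s /\
    ((exists z : int, z != 0 /\ consensus_at (run x0 s) z) \/
     (equilibrium W a b 0 (run x0 s) /\ non_consensus (run x0 s))).
Proof.
move=> n_gt0 W_stoch a_le0_le_b x0O x0_nz.
have [s [legal_s [eq_s [k xk_nz]]]] :=
  phaseA_reaches_settled n_gt0 W_stoch a_le0_le_b (conj x0O x0_nz).
by exists s; split=> //; apply: nonzero_equilibrium_cases eq_s xk_nz.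
Qed.
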